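(* Let $n\ge 2$ be an integer, let $\lambda_n:=2^n/(2^n-1)$, and consider $\mathbb{R}^{2n+1}$ with points written as $(x_1,x_2,x_3,y_1,\dots,y_{n-1},z_1,\dots,z_{n-1})$. Let $$K_n:=\Big\{(x_1,x_2,x_3,y_1,\dots,y_{n-1},z_1,\dots,z_{n-1})\;\Big|\; x_3^2\ge y_1^2+z_1^2,\ x_3\ge 0,\ x_3y_i\ge y_{i+1}^2\ (i=1,\dots,n-2),\ x_3y_{n-1}\ge x_1^2,\ x_3z_i\ge z_{i+1}^2\ (i=1,\dots,n-2),\ x_3z_{n-1}\ge x_2^2\Big\},$$ a closed convex cone, and let $K_n^\circ$ be its polar cone. Let $u_1,u_2\ge 0$ be such that $v:=(u_1,u_2,-1,0,\dots,0)$ lies in the boundary of $K_n^\circ$. Then $$N_{K_n^\circ}(v)=\mathrm{cone}(w)=\{\alpha w:\alpha\ge 0\},$$ where $w:=\big(u_1^{\lambda_n/2^n},\,u_2^{\lambda_n/2^n},\,1,\,u_1^{\lambda_n/2^1},\dots,u_1^{\lambda_n/2^{n-1}},\,u_2^{\lambda_n/2^1},\dots,u_2^{\lambda_n/2^{n-1}}\big)$.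
   Context: $\mathbb{R}^{2n+1}$ carries the standard Euclidean inner product. The polar cone of a cone $C$ is $C^\circ=\{v:\langle v,z\rangle\le 0\ \forall z\in C\}$. For a closed convex set $C$ and $\bar z\in C$, the normal cone is $N_C(\bar z)=\{v:\langle v,z-\bar z\rangle\le 0\ \forall z\in C\}$. *)

(* Points of R^(2n+1) are row vectors 'rV[R]_(2n+1)
   with the (product = Euclidean) topology of mathcomp-analysis. *)
From HB Require Import structures.
From mathcomp Require Import all_boot all_order all_algebra.
From mathcomp Require Import all_classical all_reals all_analysis.
Set Implicit Arguments. Unset Strict Implicit. Unset Printing Implicit Defensive.
Import Order.TTheory GRing.Theory Num.Theory.
Import numFieldNormedType.Exports.
Local Open Scope classical_set_scope.
Local Open Scope ring_scope.

Section Defs.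
Variable R : realType.

Definition dotv (k : nat) (u v : 'rV[R]_k) : R := \sum_(i < k) u 0 i * v 0 i.

Definition polar_cone (k : nat) (C : set 'rV[R]_k) : set 'rV[R]_k :=
  [set v | forall z, C z -> dotv v z <= 0].

Definition normal_cone (k : nat) (C : set 'rV[R]_k) (zb : 'rV[R]_k) : set 'rV[R]_k :=
  [set v | forall z, C z -> dotv v (z - zb) <= 0].

Definition boundary (k : nat) (A : set 'rV[R]_k) : set 'rV[R]_k :=
  closure A `\` interior A.

(* coordinates: index 0,1,2 = x1,x2,x3 ; 2+i = y_i (1<=i<=n-1) ;
   n+1+i = z_i (1<=i<=n-1) *)
Definition cX1 n (p : 'rV[R]_(2*n).+1) : R := p 0 (inord 0).
Definition cX2 n (p : 'rV[R]_(2*n).+1) : R := p 0 (inord 1).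
Definition cX3 n (p : 'rV[R]_(2*n).+1) : R := p 0 (inord 2).
Definition cY n (p : 'rV[R]_(2*n).+1) (i : nat) : R := p 0 (inord (2 + i)).
Definition cZ n (p : 'rV[R]_(2*n).+1) (i : nat) : R := p 0 (inord (n + 1 + i)).

Definition Kn (n : nat) : set 'rV[R]_(2*n).+1 :=
  [set p | cX3 p ^+ 2 >= cY p 1 ^+ 2 + cZ p 1 ^+ 2
         /\ cX3 p >= 0
         /\ (forall i, (1 <= i <= n - 2)%N -> cX3 p * cY p i >= cY p i.+1 ^+ 2)
         /\ cX3 p * cY p (n - 1) >= cX1 p ^+ 2
         /\ (forall i, (1 <= i <= n - 2)%N -> cX3 p * cZ p i >= cZ p i.+1 ^+ 2)
         /\ cX3 p * cZ p (n - 1) >= cX2 p ^+ 2].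

Definition lambda_n (n : nat) : R := 2 ^+ n / (2 ^+ n - 1).

Definition vvec (n : nat) (u1 u2 : R) : 'rV[R]_(2*n).+1 :=
  \row_(j < (2*n).+1)
    if (j == 0%N :> nat) then u1
    else if (j == 1%N :> nat) then u2
    else if (j == 2%N :> nat) then -1 else 0.

Definition wvec (n : nat) (u1 u2 : R) : 'rV[R]_(2*n).+1 :=
  \row_(j < (2*n).+1)
    if (j == 0%N :> nat) then u1 `^ (lambda_n n / 2 ^+ n)
    else if (j == 1%N :> nat) then u2 `^ (lambda_n n / 2 ^+ n)
    else if (j == 2%N :> nat) then 1
    else if (j <= n + 1)%N then u1 `^ (lambda_n n / 2 ^+ (j - 2))
    else u2 `^ (lambda_n n / 2 ^+ (j - n - 1)).

End Defs.

From mathcomp Require Import all_boot all_order all_algebra.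
From mathcomp Require Import all_classical all_reals all_analysis.
From mathcomp Require Import ring lra zify.
Import Order.TTheory GRing.Theory Num.Theory.
Import numFieldNormedType.Exports.
Local Open Scope classical_set_scope.
Local Open Scope ring_scope.
Set Implicit Arguments. Unset Strict Implicit. Unset Printing Implicit Defensive.

(* Write [u1 = t ^ (2 ^ n - 1)], [u2 = s ^ (2 ^ n - 1)] with [t, s >= 0], which is
   possible because [lambda_n * (2 ^ n - 1) / 2 ^ n = 1], and put
   [T = t ^ 2 ^ n + s ^ 2 ^ n].  Iterating the tangent-line bound
   [2 a c <= a ^ 2 x + c'] (valid when [c ^ 2 <= x c']) along the two chains of
   [K_n] gives, for every [p] in [K_n],
     [2 ^ n <v, p> <= (2 ^ n - 1) (T - 1) x3(p)],
   with equality for [T = 1] only on the ray spanned by [w].  Hence [v] lies in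
   the polar cone iff [T <= 1], and in its interior when [T < 1], so the boundary
   condition forces [T = 1].  The normal cone of the convex cone [P = K_n°] at
   [v] is [{q in P° | <q, v> = 0}], and [P° = K_n] because [K_n] is cut out by
   tangent planes of its quadratic constraints, all of which lie in [P]; by
   the equality case the [q] in question are the nonnegative multiples of [w]. *)

Lemma expr_pow2S (R : pzSemiRingType) (t : R) m : t ^+ (2 ^ m.+1) = t ^+ (2 ^ m) ^+ 2.
Proof. by rewrite expnSr exprM. Qed.

Lemma expr_pow2S_pred (R : pzSemiRingType) (t : R) m :
  t ^+ (2 ^ m.+1).-1 = t ^+ (2 ^ m) * t ^+ (2 ^ m).-1.
Proof. by rewrite -exprD; congr (_ ^+ _); rewrite expnS; have := expn_gt0 2 m; lia. Qed.

Section ScalarInequalities.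
Variable R : realFieldType.

Lemma tangent_le (x a c c' : R) : 0 < x -> c ^+ 2 <= x * c' ->
  2 * a * c <= a ^+ 2 * x + c'.
Proof.
move=> hx hc; rewrite -subr_ge0 -(pmulr_rge0 _ hx).
have -> : x * (a ^+ 2 * x + c' - 2 * a * c) = (a * x - c) ^+ 2 + (x * c' - c ^+ 2)
  by ring.
by rewrite addr_ge0 ?sqr_ge0 ?subr_ge0.
Qed.

Lemma tangent_eq (x a c c' : R) : 0 < x -> c ^+ 2 <= x * c' ->
  2 * a * c = a ^+ 2 * x + c' -> c = a * x /\ c' = a ^+ 2 * x.
Proof.
move=> hx hc heq.
have : (a * x - c) ^+ 2 + (x * c' - c ^+ 2) == 0.
  apply/eqP; transitivity (x * (a ^+ 2 * x + c' - 2 * a * c)); first by ring.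
  by rewrite heq subrr mulr0.
rewrite paddr_eq0 ?sqr_ge0 ?subr_ge0 // sqrf_eq0 !subr_eq0.
move=> /andP[/eqP hac /eqP hxc]; split; first by rewrite hac.
by apply: (mulfI (lt0r_neq0 hx)); rewrite hxc -hac; ring.
Qed.

Section SquareChain.
Variables (x t : R).
Hypotheses (hx : 0 < x) (ht : 0 <= t).

(* Chaining [tangent_le] with the slopes [t ^+ 2 ^ k] bounds the last term of
   a chain [c (j+1)^2 <= x c j] linearly by the first one. *)
Lemma chain_le m (c : nat -> R) : (forall j, (j < m)%N -> c j.+1 ^+ 2 <= x * c j) ->
  2 ^+ m * t ^+ (2 ^ m).-1 * c m <= (2 ^+ m - 1) * t ^+ (2 ^ m) * x + c 0%N.
Proof.
elim: m c => [|m IH] c hc; first by rewrite !expr0 expn0 subrr !mul0r !mul1r add0r.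
have /= hL := IH (fun j => c j.+1) (fun j hj => hc j.+1 hj).
have hc1 := tangent_le (t ^+ (2 ^ m)) hx (hc 0%N isT).
have hA : 0 <= 2 * t ^+ (2 ^ m) by rewrite mulr_ge0 ?exprn_ge0.
have := ler_wpM2l hA hL.
rewrite expr_pow2S expr_pow2S_pred [2 ^+ m.+1]exprS; lra.
Qed.

Lemma chain_eq_gt0 m (c : nat -> R) : 0 < t ->
  (forall j, (j < m)%N -> c j.+1 ^+ 2 <= x * c j) ->
  2 ^+ m * t ^+ (2 ^ m).-1 * c m = (2 ^+ m - 1) * t ^+ (2 ^ m) * x + c 0%N ->
  forall j, (0 < j <= m)%N -> c j = t ^+ (2 ^ (m - j)) * x.
Proof.
move=> htp; elim: m c => [|m IH] c hc heq j hj; first lia.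
have hc' i : (i < m)%N -> c i.+2 ^+ 2 <= x * c i.+1 by exact: hc i.+1.
have hL := chain_le hc'.
have hc1 := tangent_le (t ^+ (2 ^ m)) hx (hc 0%N isT).
have hA : 0 < 2 * t ^+ (2 ^ m) by rewrite mulr_gt0 ?exprn_gt0.
have hL2 := ler_wpM2l (ltW hA) hL.
rewrite expr_pow2S expr_pow2S_pred [2 ^+ m.+1]exprS in heq.
have heq1 : 2 * t ^+ (2 ^ m) * c 1%N = t ^+ (2 ^ m) ^+ 2 * x + c 0%N by lra.
have heqL : 2 ^+ m * t ^+ (2 ^ m).-1 * c m.+1 = (2 ^+ m - 1) * t ^+ (2 ^ m) * x + c 1%N.
  by apply: (mulfI (lt0r_neq0 hA)); lra.
have [c1E _] := tangent_eq hx (hc 0%N isT) heq1.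
case: j hj => [|[|j]] hj //; first by rewrite c1E subn1.
by rewrite subSS (IH _ hc' heqL) //; lia.
Qed.
End SquareChain.

Lemma chain_zero (x : R) m (c : nat -> R) : (forall j, (j < m)%N -> c j.+1 ^+ 2 <= x * c j) ->
  c 0%N = 0 -> forall j, (j <= m)%N -> c j = 0.
Proof.
move=> hc c0; elim=> [|j IH] hj //.
have := hc j hj; rewrite IH ?mulr0; last lia.
by move=> h; apply/eqP; rewrite -sqrf_eq0 eq_le h sqr_ge0.
Qed.

Lemma chain_eq (x t : R) m (c : nat -> R) : 0 < x -> 0 <= t ->
  (forall j, (j < m)%N -> c j.+1 ^+ 2 <= x * c j) ->
  2 ^+ m * t ^+ (2 ^ m).-1 * c m = (2 ^+ m - 1) * t ^+ (2 ^ m) * x + c 0%N ->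
  forall j, (0 < j <= m)%N -> c j = t ^+ (2 ^ (m - j)) * x.
Proof.
move=> hx ht hc heq j hj; case: (eqVneq t 0) => [t0|tn0]; last first.
  by apply: (chain_eq_gt0 hx) => //; rewrite lt_def tn0.
have hm : (1 < 2 ^ m)%N by rewrite -{1}(expn0 2) ltn_exp2l //; lia.
move: heq; rewrite t0 !expr0n (_ : (2 ^ m == 0)%N = false) ?expn_eq0 //.
rewrite (_ : ((2 ^ m).-1 == 0)%N = false); last lia.
rewrite !mulr0 !mul0r add0r => /esym c0.
rewrite (chain_zero hc c0) ?expr0n ?(_ : (2 ^ (m - j) == 0)%N = false) ?expn_eq0 ?mul0r //.
lia.
Qed.

Lemma norm_le_of_sqr_le (x y c : R) : 0 <= x -> c ^+ 2 <= x * y -> `|y| <= x -> `|c| <= x.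
Proof.
move=> hx hc hy; have hy' : y <= `|y| := ler_norm y.
have hc2 : `|c| ^+ 2 = c ^+ 2 by rewrite real_normK ?num_real.
have := normr_ge0 c; nra.
Qed.

(* The rotated cone [c ^ 2 <= x y, x, y >= 0] is dual to the family of
   its tangent planes [A |-> (2 A, - A ^ 2, -1)]. *)
Lemma rotated_cone_polar (x y c A : R) : 0 <= x -> 0 <= y -> c ^+ 2 <= x * y ->
  2 * A * c - A ^+ 2 * x - y <= 0.
Proof.
move=> hx hy hc; case: (eqVneq x 0) => [x0|xn0].
  move: hc; rewrite x0 mul0r => hc.
  have -> : c = 0 by apply/eqP; rewrite -sqrf_eq0 eq_le hc sqr_ge0.
  lra.
have hxp : 0 < x by rewrite lt_def xn0.
have := tangent_le A hxp hc; lra.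
Qed.

Lemma rotated_cone_of_polar (x y c : R) : 0 <= x ->
  (forall A, 2 * A * c - A ^+ 2 * x - y <= 0) -> c ^+ 2 <= x * y.
Proof.
move=> hx H; case: (eqVneq x 0) => [x0|xn0].
  have hy := H 0; rewrite x0 in H hy *; rewrite mul0r.
  case: (eqVneq c 0) => [->|cn0]; first by rewrite expr0n.
  have := H ((`|y| + 1) / (2 * c)).
  have -> : 2 * ((`|y| + 1) / (2 * c)) * c = `|y| + 1 by field.
  rewrite mulr0 subr0; have := ler_norm y; lra.
have := H (c / x).
have -> : 2 * (c / x) * c - (c / x) ^+ 2 * x - y = (c ^+ 2 - x * y) / x by field.
by rewrite pmulr_lle0 ?invr_gt0 ?lt_def ?xn0 // subr_le0.
Qed.

Lemma lorentz_cone_polar (x y z a b : R) : 0 <= x -> y ^+ 2 + z ^+ 2 <= x ^+ 2 ->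
  a ^+ 2 + b ^+ 2 <= 1 -> a * y + b * z - x <= 0.
Proof.
move=> hx h1 h2.
have cs : (a * y + b * z) ^+ 2 <= (a ^+ 2 + b ^+ 2) * (y ^+ 2 + z ^+ 2).
  have := sqr_ge0 (a * z - b * y); nra.
have : (a * y + b * z) ^+ 2 <= x ^+ 2.
  apply: le_trans cs _; have := sqr_ge0 y; have := sqr_ge0 z; nra.
nra.
Qed.

End ScalarInequalities.

Lemma lorentz_cone_of_polar (R : rcfType) (x y z : R) : 0 <= x ->
  (forall a b, a ^+ 2 + b ^+ 2 <= 1 -> a * y + b * z - x <= 0) ->
  y ^+ 2 + z ^+ 2 <= x ^+ 2.
Proof.
move=> hx H.
set r := Num.sqrt (y ^+ 2 + z ^+ 2).
have hr2 : r ^+ 2 = y ^+ 2 + z ^+ 2 by rewrite sqr_sqrtr // addr_ge0 ?sqr_ge0.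
have hr0 : 0 <= r by rewrite sqrtr_ge0.
case: (eqVneq r 0) => [r0|rn0]; first by rewrite -hr2 r0 expr0n /= sqr_ge0.
have := H (y / r) (z / r).
have -> : (y / r) ^+ 2 + (z / r) ^+ 2 = 1.
  by rewrite !expr_div_n -mulrDl -hr2 divff // expf_neq0.
have -> : y / r * y + z / r * z = r.
  by rewrite mulrAC [z / r * z]mulrAC -mulrDl -!expr2 -hr2 expr2 mulrK // unitfE.
move=> /(_ (lexx _)) h; rewrite -hr2; nra.
Qed.

Section PolarCone.
Variables (R : realType) (k : nat).
Implicit Types (u v w p q : 'rV[R]_k) (C : set 'rV[R]_k).

Lemma dotvC u v : dotv u v = dotv v u.
Proof. by apply: eq_bigr => i _; rewrite mulrC. Qed.

Lemma dotvDl u v w : dotv (u + v) w = dotv u w + dotv v w.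
Proof. by rewrite /dotv -big_split; apply: eq_bigr => i _; rewrite mxE mulrDl. Qed.

Lemma dotvBl u v w : dotv (u - v) w = dotv u w - dotv v w.
Proof. by rewrite /dotv -sumrB; apply: eq_bigr => i _; rewrite !mxE mulrBl. Qed.

Lemma dotvZl a u w : dotv (a *: u) w = a * dotv u w.
Proof. by rewrite /dotv mulr_sumr; apply: eq_bigr => i _; rewrite mxE mulrA. Qed.

Lemma dotvBr u v w : dotv u (v - w) = dotv u v - dotv u w.
Proof. by rewrite !(dotvC u) dotvBl. Qed.

Lemma dotv0r u : dotv u 0 = 0.
Proof. by rewrite /dotv big1 // => i _; rewrite mxE mulr0. Qed.

Lemma dotv_deltal (j : 'I_k) p : dotv (delta_mx 0 j) p = p 0 j.
Proof.
rewrite /dotv (bigD1 j) //= big1 ?addr0 => [|i /negbTE hij]; rewrite !mxE.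
  by rewrite !eqxx mul1r.
by rewrite hij andbF mul0r.
Qed.

Lemma polar_cone0 C : polar_cone C 0.
Proof. by move=> z _; rewrite dotvC dotv0r. Qed.

Lemma polar_coneD C u v : polar_cone C u -> polar_cone C v -> polar_cone C (u + v).
Proof. by move=> hu hv z Cz; rewrite dotvDl -[0](addr0 0) lerD ?hu ?hv. Qed.

Lemma polar_coneZ C a u : 0 <= a -> polar_cone C u -> polar_cone C (a *: u).
Proof. by move=> ha hu z Cz; rewrite dotvZl mulr_ge0_le0 ?hu. Qed.

Lemma sub_polar_polar C : C `<=` polar_cone (polar_cone C).
Proof. by move=> z Cz u hu; rewrite dotvC hu. Qed.

Lemma normal_cone_coneE C v : C 0 -> (forall u w, C u -> C w -> C (u + w)) -> C v ->
  normal_cone C v = [set q | polar_cone C q /\ dotv q v = 0].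
Proof.
move=> C0 CD Cv; apply/seteqP; split=> q /=.
  move=> hq; have hq0 : 0 <= dotv q v.
    by have := hq 0 C0; rewrite sub0r -(sub0r v) dotvBr dotv0r sub0r oppr_le0.
  have polq : polar_cone C q.
    by move=> z Cz; have := hq (z + v) (CD _ _ Cz Cv); rewrite addrK.
  by split=> //; apply/eqP; rewrite eq_le hq0 polq.
by move=> [polq qv0] z Cz; rewrite dotvBr qv0 subr0 polq.
Qed.

Lemma ball_dotv u v p e : ball u e v ->
  `|dotv u p - dotv v p| <= e * \sum_(j < k) `|p 0 j|.
Proof.
move=> [_ huv]; rewrite -dotvBl /dotv mulr_sumr.
apply: le_trans (ler_norm_sum _ _ _) _; apply: ler_sum => j _.
by rewrite !mxE normrM ler_wpM2r // ltW // huv.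
Qed.

Lemma closure_polar_cone C : closure (polar_cone C) `<=` polar_cone C.
Proof.
move=> u hcl z Cz; apply/ler_addgt0Pr => e he; rewrite add0r.
set M := \sum_(j < k) `|z 0 j|.
have hM : 0 <= M by rewrite sumr_ge0.
have hM1 : 0 < M + 1 by lra.
have [v [hv huv]] := hcl _ (nbhsx_ballx u _ (divr_gt0 he hM1)).
have hMe : e / (M + 1) * M <= e.
  by rewrite mulrAC ler_pdivrMr // mulrDr mulr1 lerDl ltW.
have := ball_dotv z huv; rewrite -/M => hb.
have := hv z Cz; have := ler_norm (dotv u z - dotv v z); lra.
Qed.

End PolarCone.

Section Kn.
Variables (R : realType) (n : nat).
Hypothesis hn : (2 <= n)%N.
Local Notation V := 'rV[R]_(2 * n).+1.
Local Notation K := (@Kn R n).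

Lemma coord_ind (P : 'I_(2 * n).+1 -> Prop) :
  P (inord 0) -> P (inord 1) -> P (inord 2) ->
  (forall i, (1 <= i <= n - 1)%N -> P (inord (2 + i))) ->
  (forall i, (1 <= i <= n - 1)%N -> P (inord (n + 1 + i))) -> forall j, P j.
Proof.
move=> P0 P1 P2 PY PZ j; rewrite -(inord_val j).
case: j => [[|[|[|j]]] hj] //=.
have [hjn|hjn] := leqP j.+3 (n + 1).
  by have := PY j.+1; apply; lia.
have -> : j.+3 = (n + 1 + (j.+2 - n))%N by lia.
by apply: PZ; lia.
Qed.

Lemma coord_scale_eq (p q : V) a :
  cX1 p = a * cX1 q -> cX2 p = a * cX2 q -> cX3 p = a * cX3 q ->
  (forall i, (1 <= i <= n - 1)%N -> cY p i = a * cY q i) ->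
  (forall i, (1 <= i <= n - 1)%N -> cZ p i = a * cZ q i) -> p = a *: q.
Proof.
move=> h1 h2 h3 hY hZ; apply/rowP; apply: coord_ind => [|||i hi|i hi]; rewrite mxE.
- exact: h1.
- exact: h2.
- exact: h3.
- exact: hY.
- exact: hZ.
Qed.

Definition sqr_chain (x a : R) (f : nat -> R) : Prop :=
  (forall i, (1 <= i <= n - 2)%N -> f i.+1 ^+ 2 <= x * f i) /\ a ^+ 2 <= x * f (n - 1)%N.

Lemma KnP (p : V) : K p <->
  [/\ 0 <= cX3 p, cY p 1 ^+ 2 + cZ p 1 ^+ 2 <= cX3 p ^+ 2,
      sqr_chain (cX3 p) (cX1 p) (cY p) & sqr_chain (cX3 p) (cX2 p) (cZ p)].
Proof. by split=> [[? [? [? [? [? ?]]]]] | [? ? [? ?] [? ?]]]. Qed.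

Section SqrChain.
Variables (x a : R) (f : nat -> R).
Hypothesis hf : sqr_chain x a f.

Lemma sqr_chain_norm_le : 0 <= x -> `|f 1%N| <= x ->
  forall i, (1 <= i <= n - 1)%N -> `|f i| <= x.
Proof.
move=> hx hf1; elim=> [|i IH] hi; first lia.
case: (eqVneq i 0%N) => [->|hi0] //.
by apply: (norm_le_of_sqr_le hx (hf.1 i _)); [lia | apply: IH; lia].
Qed.

Lemma sqr_chain_norm_le_last : 0 <= x -> `|f 1%N| <= x -> `|a| <= x.
Proof.
move=> hx hf1; apply: (norm_le_of_sqr_le hx hf.2).
by apply: sqr_chain_norm_le => //; lia.
Qed.

Lemma sqr_chain_ge0 : 0 <= x -> `|f 1%N| <= x ->
  forall i, (1 <= i <= n - 1)%N -> 0 <= f i.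
Proof.
move=> hx hf1 i hi; case: (eqVneq x 0) => [x0|xn0].
  by have := sqr_chain_norm_le hx hf1 hi; rewrite x0 normr_le0 => /eqP ->.
have hxp : 0 < x by rewrite lt_def xn0.
rewrite -(pmulr_rge0 _ hxp).
have [hin|hin] := ltnP i (n - 1).
  by apply: le_trans (sqr_ge0 _) (hf.1 i _); lia.
have -> : i = (n - 1)%N by lia.
by apply: le_trans (sqr_ge0 _) hf.2.
Qed.

(* The chain [f 1, ..., f (n-1), a] prefixed with [f 1 ^+ 2 / x], so that
   [chain_le] applies to it. *)
Definition chain_seq (j : nat) : R :=
  if j == 0%N then f 1%N ^+ 2 / x else if (j < n)%N then f j else a.

Lemma chain_seq_sqr_le : 0 < x -> forall j, (j < n)%N -> chain_seq j.+1 ^+ 2 <= x * chain_seq j.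
Proof.
move=> hx j hj; rewrite /chain_seq /=.
case: (eqVneq j 0%N) => [->|hj0] /=.
  by rewrite ifT; [rewrite mulrC divfK ?lt0r_neq0 | lia].
rewrite (ifT _ _ hj); have [hjn|hjn] := ltnP j.+1 n; first by apply: hf.1; lia.
have -> : j = (n - 1)%N by lia.
exact: hf.2.
Qed.

Lemma chain_seq_ends : chain_seq 0 = f 1%N ^+ 2 / x /\ chain_seq n = a.
Proof. by rewrite /chain_seq /= ltnn ifF //; lia. Qed.

Lemma sqr_chain_le tau : 0 < x -> 0 <= tau ->
  2 ^+ n * tau ^+ (2 ^ n).-1 * a <= (2 ^+ n - 1) * tau ^+ (2 ^ n) * x + f 1%N ^+ 2 / x.
Proof.
move=> hx htau; have [c0 cn] := chain_seq_ends.
by have := chain_le hx htau (chain_seq_sqr_le hx); rewrite c0 cn.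
Qed.

Lemma sqr_chain_eq tau : 0 < x -> 0 <= tau ->
  2 ^+ n * tau ^+ (2 ^ n).-1 * a = (2 ^+ n - 1) * tau ^+ (2 ^ n) * x + f 1%N ^+ 2 / x ->
  a = tau * x /\ forall i, (1 <= i <= n - 1)%N -> f i = tau ^+ (2 ^ (n - i)) * x.
Proof.
move=> hx htau heq; have [c0 cn] := chain_seq_ends.
have hc := chain_eq hx htau (chain_seq_sqr_le hx); rewrite c0 cn in hc; have {}hc := hc heq.
split; first by have := hc n; rewrite cn subnn expr1; apply; lia.
move=> i hi; have := hc i; rewrite /chain_seq ifF ?ifT; [apply | | ]; lia.
Qed.

End SqrChain.

Lemma Kn_first_norm_le (p : V) : K p -> `|cY p 1| <= cX3 p /\ `|cZ p 1| <= cX3 p.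
Proof.
case/KnP=> hx hsoc _ _; have hx3 : `|cX3 p| <= cX3 p by rewrite ger0_norm.
split; apply: (norm_le_of_sqr_le hx _ hx3); rewrite -expr2.
  by have := sqr_ge0 (cZ p 1); lra.
by have := sqr_ge0 (cY p 1); lra.
Qed.

Lemma Kn_norm_le (p : V) : K p -> forall j, `|p 0 j| <= cX3 p.
Proof.
move=> hp; have [hy1 hz1] := Kn_first_norm_le hp; case/KnP: hp => hx _ hy hz.
apply: coord_ind => [|||i hi|i hi].
- exact: sqr_chain_norm_le_last hy hx hy1.
- exact: sqr_chain_norm_le_last hz hx hz1.
- by rewrite ger0_norm.
- exact: sqr_chain_norm_le hy hx hy1 i hi.
- exact: sqr_chain_norm_le hz hx hz1 i hi.
Qed.

Lemma Kn_eq0 (p : V) : K p -> cX3 p = 0 -> p = 0.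
Proof.
move=> hp h0; apply/rowP => j; rewrite mxE.
by apply/eqP; rewrite -normr_le0 -h0 Kn_norm_le.
Qed.

Lemma Kn_sum_norm_le (p : V) : K p ->
  \sum_(j < (2 * n).+1) `|p 0 j| <= (2 * n).+1%:R * cX3 p.
Proof.
move=> hp; rewrite mulr_natl -[X in _ *+ X]card_ord -sumr_const.
by apply: ler_sum => j _; exact: Kn_norm_le.
Qed.

Lemma KnY_ge0 (p : V) i : K p -> (1 <= i <= n - 1)%N -> 0 <= cY p i.
Proof.
move=> hp; have [hy1 _] := Kn_first_norm_le hp; case/KnP: hp => hx _ hy _.
exact: sqr_chain_ge0 hy hx hy1 i.
Qed.

Lemma KnZ_ge0 (p : V) i : K p -> (1 <= i <= n - 1)%N -> 0 <= cZ p i.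
Proof.
move=> hp; have [_ hz1] := Kn_first_norm_le hp; case/KnP: hp => hx _ _ hz.
exact: sqr_chain_ge0 hz hx hz1 i.
Qed.

Lemma polar_Kn_rotated A ic iy :
  (forall p, K p -> 0 <= p 0 (inord iy) /\ p 0 (inord ic) ^+ 2 <= cX3 p * p 0 (inord iy)) ->
  polar_cone K ((2 * A) *: 'e_(inord ic) - A ^+ 2 *: 'e_(inord 2) - 'e_(inord iy)).
Proof.
move=> H p hp; rewrite !dotvBl !dotvZl !dotv_deltal; have [hy hc] := H p hp.
by apply: rotated_cone_polar => //; case/KnP: hp.
Qed.

Lemma polar_Kn_lorentz a b : a ^+ 2 + b ^+ 2 <= 1 ->
  polar_cone K (a *: 'e_(inord 3) + b *: 'e_(inord (n + 1 + 1)) - 'e_(inord 2)).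
Proof.
move=> hab p /KnP[hx hsoc _ _]; rewrite dotvBl dotvDl !dotvZl !dotv_deltal.
exact: lorentz_cone_polar.
Qed.

(* The polar elements above are the tangent hyperplanes of the quadratic
   constraints defining [K], so they cut out exactly [K]. *)
Lemma polar_polar_Kn : polar_cone (polar_cone K) `<=` K.
Proof.
move=> q hq; have H g : polar_cone K g -> dotv g q <= 0 by move=> hg; rewrite dotvC hq.
have lorentz a b : a ^+ 2 + b ^+ 2 <= 1 -> a * cY q 1 + b * cZ q 1 - cX3 q <= 0.
  by move=> hab; have := H _ (polar_Kn_lorentz hab); rewrite dotvBl dotvDl !dotvZl !dotv_deltal.
have hx : 0 <= cX3 q by have := lorentz 0 0; rewrite expr0n /= addr0 => /(_ ler01); lra.
have rot ic iy : (forall p, K p -> 0 <= p 0 (inord iy) /\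
    p 0 (inord ic) ^+ 2 <= cX3 p * p 0 (inord iy)) ->
    q 0 (inord ic) ^+ 2 <= cX3 q * q 0 (inord iy).
  move=> hK; apply: rotated_cone_of_polar hx _ => A.
  by have := H _ (polar_Kn_rotated A hK); rewrite !dotvBl !dotvZl !dotv_deltal.
apply/KnP; split=> //; first exact: lorentz_cone_of_polar hx lorentz.
- split=> [i hi|].
    apply: (rot (2 + i.+1)%N (2 + i)%N) => p hp; split; first by apply: KnY_ge0 hp _; lia.
    by case/KnP: hp => _ _ [hy _] _; exact: hy.
  apply: (rot 0%N (2 + (n - 1))%N) => p hp; split; first by apply: KnY_ge0 hp _; lia.
  by case/KnP: hp => _ _ [_ hy] _.
- split=> [i hi|].
    apply: (rot (n + 1 + i.+1)%N (n + 1 + i)%N) => p hp; split; first by apply: KnZ_ge0 hp _; lia.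
    by case/KnP: hp => _ _ _ [hz _]; exact: hz.
  apply: (rot 1%N (n + 1 + (n - 1))%N) => p hp; split; first by apply: KnZ_ge0 hp _; lia.
  by case/KnP: hp => _ _ _ [_ hz].
Qed.

Lemma vvecE (u1 u2 : R) :
  vvec n u1 u2 = u1 *: 'e_(inord 0) + u2 *: 'e_(inord 1) - 'e_(inord 2) :> V.
Proof.
apply/rowP => j; rewrite !mxE /= -!(inj_eq val_inj) /= !inordK; try lia.
by case: j => [[|[|[|j]]] hj] /=; rewrite ?mulr1 ?mulr0; lra.
Qed.

Lemma dotv_vvec (u1 u2 : R) (p : V) :
  dotv (vvec n u1 u2) p = u1 * cX1 p + u2 * cX2 p - cX3 p.
Proof. by rewrite vvecE dotvBl dotvDl !dotvZl !dotv_deltal. Qed.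

(* The vector [w] of the theorem in the coordinates [t = u1 ^ (lambda_n / 2 ^ n)],
   [s = u2 ^ (lambda_n / 2 ^ n)] (see [wvec_pow_point]); all chains of [K] are
   tight at it. *)
Definition pow_point (t s : R) : V := \row_(j < (2 * n).+1)
  if j == 0%N :> nat then t else if j == 1%N :> nat then s
  else if j == 2%N :> nat then 1
  else if (j <= n + 1)%N then t ^+ (2 ^ (n + 2 - j)) else s ^+ (2 ^ (2 * n + 1 - j)).

Lemma cX1_pow_point t s : cX1 (pow_point t s) = t.
Proof. by rewrite /cX1 mxE inordK. Qed.

Lemma cX2_pow_point t s : cX2 (pow_point t s) = s.
Proof. by rewrite /cX2 mxE inordK //; lia. Qed.

Lemma cX3_pow_point t s : cX3 (pow_point t s) = 1.
Proof. by rewrite /cX3 mxE inordK //; lia. Qed.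

Lemma cY_pow_point t s i : (1 <= i <= n - 1)%N ->
  cY (pow_point t s) i = t ^+ (2 ^ (n - i)).
Proof.
move=> hi; rewrite /cY mxE inordK; last lia.
have [-> -> -> ->] : [/\ (2 + i == 0)%N = false, (2 + i == 1)%N = false,
  (2 + i == 2)%N = false & (2 + i <= n + 1)%N = true] by split; lia.
by congr (_ ^+ (2 ^ _)); lia.
Qed.

Lemma cZ_pow_point t s i : (1 <= i <= n - 1)%N ->
  cZ (pow_point t s) i = s ^+ (2 ^ (n - i)).
Proof.
move=> hi; rewrite /cZ mxE inordK; last lia.
have [-> -> -> ->] : [/\ (n + 1 + i == 0)%N = false, (n + 1 + i == 1)%N = false,
  (n + 1 + i == 2)%N = false & (n + 1 + i <= n + 1)%N = false] by split; lia.
by congr (_ ^+ (2 ^ _)); lia.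
Qed.

Lemma sqr_chain_pow (t : R) (f : nat -> R) :
  (forall i, (1 <= i <= n - 1)%N -> f i = t ^+ (2 ^ (n - i))) -> sqr_chain 1 t f.
Proof.
move=> hf; split=> [i hi|]; rewrite mul1r.
  rewrite (hf i.+1) ?(hf i); try lia.
  by rewrite -expr_pow2S (_ : (n - i.+1).+1 = n - i)%N //; lia.
rewrite (hf (n - 1)%N); last lia.
by rewrite (_ : (n - (n - 1) = 1)%N) ?expn1 //; lia.
Qed.

Lemma Kn_pow_point t s : t ^+ (2 ^ n) + s ^+ (2 ^ n) <= 1 -> K (pow_point t s).
Proof.
move=> hT; apply/KnP; rewrite cX3_pow_point; split.
- exact: ler01.
- rewrite cY_pow_point ?cZ_pow_point ?expr1n; try lia.
  by rewrite -!expr_pow2S (_ : (n - 1).+1 = n)%N //; lia.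
- by rewrite cX1_pow_point; apply: sqr_chain_pow => i hi; exact: cY_pow_point.
- by rewrite cX2_pow_point; apply: sqr_chain_pow => i hi; exact: cZ_pow_point.
Qed.

Lemma two_pow_gt1 : 1 < 2 ^+ n :> R.
Proof. by rewrite -natrX ltr1n -{1}(expn0 2) ltn_exp2l //; lia. Qed.

Lemma expr_pred_pow2 (x : R) : x ^+ (2 ^ n).-1 * x = x ^+ (2 ^ n).
Proof. by rewrite -exprSr prednK // expn_gt0. Qed.

Section Ray.
Variables t s : R.
Hypotheses (ht : 0 <= t) (hs : 0 <= s).
Local Notation v := (vvec n (t ^+ (2 ^ n).-1) (s ^+ (2 ^ n).-1)).
Local Notation T := (t ^+ (2 ^ n) + s ^+ (2 ^ n)).

Lemma dotv_vvec_le (p : V) : K p -> 2 ^+ n * dotv v p <= (2 ^+ n - 1) * (T - 1) * cX3 p.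
Proof.
move=> hp; have /KnP[hx0 hsoc hy hz] := hp.
case: (eqVneq (cX3 p) 0) => [x0|xn0].
  by rewrite x0 mulr0 (Kn_eq0 hp x0) dotv0r mulr0.
have hx : 0 < cX3 p by rewrite lt_def xn0.
have hY := sqr_chain_le hy hx ht; have hZ := sqr_chain_le hz hx hs.
have hq : cY p 1 ^+ 2 / cX3 p + cZ p 1 ^+ 2 / cX3 p <= cX3 p.
  by rewrite -mulrDl ler_pdivrMr // -expr2.
rewrite dotv_vvec; lra.
Qed.

Lemma Kn_dotv_vvec_eq (p : V) : T = 1 -> K p -> dotv v p = 0 -> p = cX3 p *: pow_point t s.
Proof.
move=> hT hp; rewrite dotv_vvec => hvp; have /KnP[hx0 hsoc hy hz] := hp.
case: (eqVneq (cX3 p) 0) => [x0|xn0]; first by rewrite x0 scale0r (Kn_eq0 hp x0).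
have hx : 0 < cX3 p by rewrite lt_def xn0.
have hY := sqr_chain_le hy hx ht; have hZ := sqr_chain_le hz hx hs.
have hq : cY p 1 ^+ 2 / cX3 p + cZ p 1 ^+ 2 / cX3 p <= cX3 p.
  by rewrite -mulrDl ler_pdivrMr // -expr2.
have eT : (2 ^+ n - 1) * t ^+ (2 ^ n) * cX3 p + (2 ^+ n - 1) * s ^+ (2 ^ n) * cX3 p =
    (2 ^+ n - 1) * cX3 p.
  by transitivity ((2 ^+ n - 1) * T * cX3 p); [ring | rewrite hT mulr1].
have e : 2 ^+ n * t ^+ (2 ^ n).-1 * cX1 p + 2 ^+ n * s ^+ (2 ^ n).-1 * cX2 p =
    2 ^+ n * cX3 p by rewrite -!mulrA -mulrDr; congr (_ * _); lra.
have eqY : 2 ^+ n * t ^+ (2 ^ n).-1 * cX1 p =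
    (2 ^+ n - 1) * t ^+ (2 ^ n) * cX3 p + cY p 1 ^+ 2 / cX3 p by lra.
have eqZ : 2 ^+ n * s ^+ (2 ^ n).-1 * cX2 p =
    (2 ^+ n - 1) * s ^+ (2 ^ n) * cX3 p + cZ p 1 ^+ 2 / cX3 p by lra.
have [hx1 hyi] := sqr_chain_eq hy hx ht eqY.
have [hx2 hzi] := sqr_chain_eq hz hx hs eqZ.
apply: coord_scale_eq => [|||i hi|i hi].
- by rewrite cX1_pow_point hx1 mulrC.
- by rewrite cX2_pow_point hx2 mulrC.
- by rewrite cX3_pow_point mulr1.
- by rewrite cY_pow_point // hyi // mulrC.
- by rewrite cZ_pow_point // hzi // mulrC.
Qed.

Lemma polar_Kn_vvecP : polar_cone K v <-> T <= 1.
Proof.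
have h2n := two_pow_gt1.
split=> [hv|hT p hp]; last first.
  rewrite -(pmulr_rle0 _ (lt_trans ltr01 h2n)); apply: le_trans (dotv_vvec_le hp) _.
  case/KnP: hp => hx _ _ _.
  by rewrite mulr_le0_ge0 // mulr_ge0_le0 ?subr_ge0 ?subr_le0 // ltW.
rewrite leNgt; apply/negP => hT.
(* [rho] scales [(t, s)] back into the chain bound of [K] while keeping
   [rho * T > 1]. *)
have [rho rhoE] : {rho : R | rho = 2 / (1 + T)} by eexists.
have hr0 : 0 <= rho by rewrite rhoE divr_ge0 //; lra.
have hr1 : rho <= 1 by rewrite rhoE ler_pdivrMr; lra.
have hrN : rho ^+ (2 ^ n) <= rho ^+ 2.
  by apply: ler_wiXn2l => //; rewrite -{1}(expn1 2) leq_exp2l //; lia.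
have hT0 : 0 <= T by rewrite addr_ge0 // exprn_ge0.
have hK : K (pow_point (rho * t) (rho * s)).
  apply: Kn_pow_point; rewrite !exprMn -mulrDr.
  apply: le_trans (ler_wpM2r hT0 hrN) _.
  rewrite rhoE expr_div_n mulrAC ler_pdivrMr; last by rewrite exprn_gt0 //; lra.
  by have := sqr_ge0 (T - 1); lra.
have hdot : 0 < dotv v (pow_point (rho * t) (rho * s)).
  rewrite dotv_vvec cX1_pow_point cX2_pow_point cX3_pow_point.
  rewrite mulrCA [_ * (rho * s)]mulrCA !expr_pred_pow2 -mulrDr.
  have -> : rho * T - 1 = (T - 1) / (1 + T) by rewrite rhoE; field; lra.
  by rewrite divr_gt0 //; lra.
by have := hv _ hK; rewrite leNgt hdot.
Qed.

Lemma interior_polar_Kn_vvec : T < 1 -> interior (polar_cone K) v.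
Proof.
move=> hT; have h2n := two_pow_gt1.
pose d := (2 ^+ n - 1) * (1 - T) / 2 ^+ n.
have hd : 0 < d by rewrite divr_gt0 ?mulr_gt0 //; lra.
have hN : (0 : R) < (2 * n).+1%:R by rewrite ltr0n.
apply/nbhs_ballP; exists (d / (2 * n).+1%:R); first exact: divr_gt0.
move=> w hw p hp.
have hvp : dotv v p <= - (d * cX3 p).
  rewrite -(ler_pM2l (lt_trans ltr01 h2n)).
  have -> : 2 ^+ n * - (d * cX3 p) = (2 ^+ n - 1) * (T - 1) * cX3 p.
    by rewrite /d; field; lra.
  exact: dotv_vvec_le.
have hb : d / (2 * n).+1%:R * \sum_(j < (2 * n).+1) `|p 0 j| <= d * cX3 p.
  apply: le_trans (ler_wpM2l _ (Kn_sum_norm_le hp)) _; first exact/ltW/divr_gt0.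
  by rewrite mulrA divfK ?lt0r_neq0.
have := le_trans (ball_dotv p hw) hb.
by have := ler_norm (dotv w p - dotv v p); rewrite distrC; lra.
Qed.

Lemma boundary_polar_Kn_vvec : boundary (polar_cone K) v -> T = 1.
Proof.
move=> [hcl hint]; have hT1 : T <= 1 by apply/polar_Kn_vvecP/closure_polar_cone.
apply/eqP; rewrite eq_le hT1 leNgt; apply/negP => hT.
exact: hint (interior_polar_Kn_vvec hT).
Qed.

Lemma normal_cone_polar_Kn_vvec : boundary (polar_cone K) v ->
  normal_cone (polar_cone K) v = [set a *: pow_point t s | a in [set a : R | 0 <= a]].
Proof.
move=> /boundary_polar_Kn_vvec hT.
have hvP : polar_cone K v by apply/polar_Kn_vvecP; rewrite hT.
have hw : K (pow_point t s) by apply: Kn_pow_point; rewrite hT.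
have hwv : dotv (pow_point t s) v = 0.
  rewrite dotvC dotv_vvec cX1_pow_point cX2_pow_point cX3_pow_point.
  by rewrite !expr_pred_pow2 hT subrr.
rewrite normal_cone_coneE //; last exact: polar_coneD; last exact: polar_cone0.
apply/seteqP; split=> [q /= [hq hqv]|_ [a ha <-] /=].
  have hqK := polar_polar_Kn hq; rewrite dotvC in hqv.
  exists (cX3 q); first by case/KnP: hqK.
  by rewrite -(Kn_dotv_vvec_eq hT hqK hqv).
split; first exact: polar_coneZ ha (sub_polar_polar hw).
by rewrite dotvZl hwv mulr0.
Qed.

End Ray.

Lemma powR_lambda_n (u : R) k : 0 <= u -> (k <= n)%N ->
  u `^ (lambda_n R n / 2 ^+ k) = (u `^ (lambda_n R n / 2 ^+ n)) ^+ (2 ^ (n - k)).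
Proof.
move=> hu hk; rewrite -powR_mulrn ?powR_ge0 // -powRrM; congr (_ `^ _).
rewrite natrX; have -> : (2 : R) ^+ n = 2 ^+ (n - k) * 2 ^+ k by rewrite -exprD subnK.
by field; rewrite !expf_neq0.
Qed.

(* [lambda_n] is chosen so that [u ^ (lambda_n / 2 ^ n)] is the [(2 ^ n - 1)]-th root of [u]. *)
Lemma powR_lambda_n_pred (u : R) : 0 <= u ->
  (u `^ (lambda_n R n / 2 ^+ n)) ^+ (2 ^ n).-1 = u.
Proof.
move=> hu; rewrite -powR_mulrn ?powR_ge0 // -powRrM.
have h2n := two_pow_gt1.
suff -> : lambda_n R n / 2 ^+ n * ((2 ^ n).-1)%:R = 1 by rewrite powRr1.
rewrite -subn1 natrB ?expn_gt0 // natrX /lambda_n; field; lra.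
Qed.

Lemma wvec_pow_point (u1 u2 : R) : 0 <= u1 -> 0 <= u2 ->
  wvec n u1 u2 = pow_point (u1 `^ (lambda_n R n / 2 ^+ n)) (u2 `^ (lambda_n R n / 2 ^+ n)).
Proof.
move=> hu1 hu2; apply/rowP => j; rewrite !mxE; have hj := ltn_ord j.
case: ifP => [//|/negbT j0]; case: ifP => [//|/negbT j1]; case: ifP => [//|/negbT j2].
by case: ifP => hjn; rewrite powR_lambda_n //; try (congr (_ ^+ (2 ^ _)); lia); lia.
Qed.

End Kn.

Theorem lemma3 (R : realType) (n : nat) (hn : (2 <= n)%N) (u1 u2 : R)
  (hu1 : 0 <= u1) (hu2 : 0 <= u2)
  (hv : boundary (polar_cone (@Kn R n)) (vvec n u1 u2)) :
  normal_cone (polar_cone (@Kn R n)) (vvec n u1 u2) =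
  [set a *: wvec n u1 u2 | a in [set a : R | 0 <= a]].
Proof.
have := @normal_cone_polar_Kn_vvec R n hn _ _
  (powR_ge0 u1 (lambda_n R n / 2 ^+ n)) (powR_ge0 u2 (lambda_n R n / 2 ^+ n)).
by rewrite !powR_lambda_n_pred // -wvec_pow_point //; apply.
Qed.
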